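(* Let $E$ be a nonempty finite set and let $\mathcal{I}, \mathcal{I}' \subseteq 2^E$ be constructible families with $\mathrm{Max}(\mathcal{I}) = \mathrm{Max}(\mathcal{I}')$. Then the rank function $\rho'$ associated with $\mathcal{I}'$ coincides with the rank function $\rho$ associated with $\mathcal{I}$.
   Context: For a family $\mathcal{I} \subseteq 2^E$, $\mathrm{Max}(\mathcal{I})$ denotes the set of maximal members of $\mathcal{I}$ with respect to inclusion. For $I \in \mathcal{I}$, $\mathrm{ex}_{\mathcal{I}}(I) := \{e \in I \mid I \setminus \{e\} \in \mathcal{I}\}$. A nonempty family $\mathcal{I}$ is constructible if $\mathrm{ex}_{\mathcal{I}}(I) \neq \emptyset$ for all $I \in \mathcal{I}\setminus\{\emptyset\}$. The rank function of a constructible family $\mathcal{I}$ is $\rho(X) = \max_{I \in \mathcal{I}} |X \cap I|$ for $X \subseteq E$ (equivalently the maximum of $|X\cap B|$ over bases $B$, i.e. members $B \in \mathcal{I}$ such that $B \cup\{e\} \notin \mathcal{I}$ for all $e \in E\setminus B$). *)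

From mathcomp Require Import all_boot all_order.
Set Implicit Arguments. Unset Strict Implicit. Unset Printing Implicit Defensive.

Definition Maxfam (E : finType) (F : {set {set E}}) : {set {set E}} :=
  [set I in F | [forall J in F, (I \subset J) ==> (J == I)]].

Definition exF (E : finType) (F : {set {set E}}) (I : {set E}) : {set E} :=
  [set e in I | (I :\ e) \in F].

Definition constructible (E : finType) (F : {set {set E}}) : Prop :=
  F != set0 /\ (forall I, I \in F -> I != set0 -> exF F I != set0).

Definition rankF (E : finType) (F : {set {set E}}) (X : {set E}) : nat :=
  \max_(I in F) #|X :&: I|.

From mathcomp Require Import all_boot all_order.

Set Implicit Arguments.
Unset Strict Implicit.
Unset Printing Implicit Defensive.

(* Every member of a family lies below a maximal one, so the maximum of the
   monotone quantity |X :&: I| over the family is attained on Max(F).  Hence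
   the rank function depends only on Max(F). *)

Lemma Maxfam_mem (E : finType) (F : {set {set E}}) (B : {set E}) :
  B \in Maxfam F -> B \in F.
Proof. by rewrite inE => /andP []. Qed.

Lemma Maxfam_exists (E : finType) (F : {set {set E}}) (I : {set E}) :
  I \in F -> exists2 B, B \in Maxfam F & I \subset B.
Proof.
move=> IF; have [B /maxsetP [BF Bmax] IB] := maxset_exists (P := fun B => B \in F) IF.
exists B => //; rewrite inE BF /=.
by apply/forall_inP => J JF; apply/implyP => BJ; apply/eqP/Bmax.
Qed.

Lemma rankF_Maxfam (E : finType) (F : {set {set E}}) (X : {set E}) :
  rankF F X = \max_(B in Maxfam F) #|X :&: B|.
Proof.
apply/eqP; rewrite eqn_leq; apply/andP; split.
- apply/bigmax_leqP => I /Maxfam_exists [B BM IB].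
  by apply: leq_trans (bigmax_sup B BM (leqnn _)); rewrite subset_leq_card ?setIS.
- apply/bigmax_leqP => B BM.
  by rewrite (bigmax_sup B (Maxfam_mem BM) (leqnn _)).
Qed.

Theorem proposition3p2 (E : finType) (F F' : {set {set E}}) :
  0 < #|E| ->
  constructible F -> constructible F' ->
  Maxfam F = Maxfam F' ->
  forall X : {set E}, rankF F' X = rankF F X.
Proof. by move=> _ _ _ eqMax X; rewrite !rankF_Maxfam eqMax. Qed.
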